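(* Let $\alpha\in(0,\pi/2]$ and consider the system of two nonlinear equations in the unknowns $d$ and $u_1$ \begin{align*} &3(1+\cos\alpha) d^2 + 8\cos\left(\frac{\alpha}{2}\right)d u_1 + 6u_1^2 - 10(1+\alpha\csc\alpha)=0,\\ &4 d^6 - 24 d^4 + 57 d^2 - 12\sec\left(\frac{\alpha}{2}\right) d (d^2-3) u_1 + 9\sec^2\left(\frac{\alpha}{2}\right)u_1^2 + 105\csc^2\left(\frac{\alpha}{2}\right)\left(1-\alpha\csc\alpha\right)=0. \end{align*} Let $p(x)=p_1(\sqrt{x})$, where \begin{align*} p_1(d)&=-32 \sin^6\alpha\, d^{12} +256 \sin^6\alpha\,d^{10} -1184 \sin^6\alpha\,d^{8}\\ &-96 \sin^3\alpha\,(-40 \alpha +9 \sin\alpha +20 \sin2\alpha+7\sin3\alpha -30 \alpha \cos\alpha)\,d^{6}\\ &+96 \sin^3\alpha\,(-160\alpha +99 \sin\alpha +80 \sin2\alpha+7 \sin3\alpha -120\alpha \cos\alpha)\,d^{4}\\ &+13440 (\alpha -\sin\alpha)\sin^5\alpha\, \csc^2\left(\frac{\alpha }{2}\right)\,d^{2} -1800 \left(6\alpha +8\alpha\cos\alpha -2\sin\alpha(3\cos\alpha+4)\right)^2 . \end{align*} Then the number of real solutions $(d,u_1)$ of this system with $d>0$ is the same as the number of positive zeros of $p$.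
   Context: Interpolation of $G^2$ data (two points, tangent directions, curvatures) and arc length by Pythagorean-hodograph curves of degree 7, with hodograph $\mathbf{w}^2$ where $\mathbf{w}$ is a complex cubic with Bernstein coefficients $\mathbf{w}_0,\dots,\mathbf{w}_3$, $\mathbf{w}_0 = d\,e^{i\theta_0/2}$, $\mathbf{w}_3=d\,e^{i\theta_1/2}$, $\mathbf{w}_1=u_1+iv_1$, $\mathbf{w}_2=u_2+iv_2$. Data are taken from a circular arc of inner angle $2\alpha$ in canonical position ($\theta_0=-\theta_1=\alpha$, $\kappa_0=\kappa_1=-2\sin\alpha$, $L=\alpha\csc\alpha$), and the symmetric case $u_1=u_2$ (hence $v_2=-v_1$) is considered, which reduces the problem to the system above. Here $\csc=1/\sin$, $\sec=1/\cos$. *)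

From mathcomp Require Import all_boot all_order all_algebra.
From mathcomp Require Import all_classical all_reals all_analysis.
Set Implicit Arguments. Unset Strict Implicit. Unset Printing Implicit Defensive.
Import Order.TTheory GRing.Theory Num.Theory.
Local Open Scope ring_scope.

Section Defs.
Variable R : realType.

Definition csc (x : R) : R := 1 / sin x.
Definition sec (x : R) : R := 1 / cos x.

Definition eq1 (a d u1 : R) : R :=
  3 * (1 + cos a) * d ^+ 2 + 8 * cos (a / 2) * d * u1 + 6 * u1 ^+ 2
  - 10 * (1 + a * csc a).

Definition eq2 (a d u1 : R) : R :=
  4 * d ^+ 6 - 24 * d ^+ 4 + 57 * d ^+ 2
  - 12 * sec (a / 2) * d * (d ^+ 2 - 3) * u1
  + 9 * sec (a / 2) ^+ 2 * u1 ^+ 2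
  + 105 * csc (a / 2) ^+ 2 * (1 - a * csc a).

Definition p1 (a d : R) : R :=
  - 32 * sin a ^+ 6 * d ^+ 12 + 256 * sin a ^+ 6 * d ^+ 10
  - 1184 * sin a ^+ 6 * d ^+ 8
  - 96 * sin a ^+ 3 * (- 40 * a + 9 * sin a + 20 * sin (2 * a)
                        + 7 * sin (3 * a) - 30 * a * cos a) * d ^+ 6
  + 96 * sin a ^+ 3 * (- 160 * a + 99 * sin a + 80 * sin (2 * a)
                        + 7 * sin (3 * a) - 120 * a * cos a) * d ^+ 4
  + 13440 * (a - sin a) * sin a ^+ 5 * csc (a / 2) ^+ 2 * d ^+ 2
  - 1800 * (6 * a + 8 * a * cos a - 2 * sin a * (3 * cos a + 4)) ^+ 2.

Definition p (a x : R) : R := p1 a (Num.sqrt x).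

End Defs.

From mathcomp Require Import all_boot all_order all_algebra.
From mathcomp Require Import all_classical all_reals all_analysis.
From mathcomp Require Import ring lra.
Import Order.TTheory GRing.Theory Num.Theory numFieldNormedType.Exports.
Local Open Scope classical_set_scope.
Local Open Scope ring_scope.

(* Write c = cos(a/2).  The combination 3 eq1 - 2 c^2 eq2 is linear in u1, with
   coefficient 24 c d (d^2 - 2), so for d^2 <> 2 the unknown u1 is a rational
   function of d; substituting it into eq1 leaves a polynomial equation in
   x = d^2, which the tangent half-angle substitution identifies with p(x) up to
   a nonzero factor.  The value d^2 = 2 never occurs, because the u1-free part
   of the combination is positive there: with the bound a csc a >=
   sec(a/4) sec(a/2), a consequence of sin(a/4) <= a/4, this becomes a
   polynomial inequality in cos(a/4) on [23/25, 1).  Hence (d, u1) |-> d^2 is a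
   bijection from the solutions onto the positive zeros of p. *)

Section Trigonometry.
Context {R : realType}.
Implicit Types x : R.

Lemma sin_le_id x : 0 <= x -> sin x <= x.
Proof.
move=> x_ge0.
have cont : continuous (fun y : R => y - sin y).
  by move=> y; apply: cvgB => //; exact: continuous_sin.
have [|y _] := @MVT_segment R (fun y => y - sin y) (fun y => 1 - cos y) 0 x x_ge0
  (fun y _ => is_deriveB _ _); first exact: continuous_subspaceT.
rewrite /= sin0 !subr0 -subr_ge0 => ->.
by apply: mulr_ge0; rewrite ?subr_ge0 ?cos_le1.
Qed.

Lemma sin_double x : sin (2 * x) = 2 * sin x * cos x.
Proof. by rewrite mulr_natl sin_mulr2n mulr2n; ring. Qed.

Lemma cos_double x : cos (2 * x) = 2 * cos x ^+ 2 - 1.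
Proof. by rewrite mulr_natl cos_mulr2n mulr_natl. Qed.

Lemma sin_triple x : sin (3 * x) = 3 * sin x - 4 * sin x ^+ 3.
Proof.
have -> : 3 * x = 2 * x + x by ring.
by rewrite sinD sin_double cos_double -mulrA -expr2 cos2sin2; ring.
Qed.

Lemma sin_twice_half x : sin x = 2 * sin (x / 2) * cos (x / 2).
Proof. by rewrite -sin_double mulrC divfK. Qed.

Lemma cos_twice_half x : cos x = 2 * cos (x / 2) ^+ 2 - 1.
Proof. by rewrite -cos_double mulrC divfK. Qed.

End Trigonometry.

Section QuarterAngleBound.
Context {R : realFieldType}.
Implicit Types q : R.

Definition quarter_poly q : R :=
  - 4 * (64 * (2 * q ^+ 2 - 1) ^+ 2 + 30) * (2 * q ^+ 2 - 1) * q ^+ 3 * (1 + q)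
  - 120 * q ^+ 2 * (1 + q) + 210 * (2 * q ^+ 2 - 1) ^+ 2 * (1 + 2 * q + 2 * q ^+ 2).

Lemma quarter_poly_gt0 q : 23 / 25 <= q <= 1 -> 0 < quarter_poly q.
Proof.
case/andP=> q_ge q_le1.
have -> : q = 1 - (1 - q) by ring.
have : 0 <= 1 - q <= 2 / 25 by apply/andP; split; lra.
rewrite /quarter_poly; move: (1 - q) => e /andP[e_ge0 e_le]; clear q_ge q_le1.
have h0 : 0 <= 2 / 25 - e by lra.
have h1 : 0 <= e * (2 / 25 - e) by nra.
have h2 : 0 <= e ^+ 2 * (2 / 25 - e) by nra.
have h3 : 0 <= e ^+ 3 * (2 / 25 - e) by nra.
have h4 : 0 <= e * (2 / 25 - e) ^+ 2 by nra.
have h5 : 0 <= (2 / 25 - e) ^+ 3 by nra.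
have h6 : 0 <= e ^+ 5 * (1 - e) by rewrite mulr_ge0 ?exprn_ge0 //; lra.
have h7 : 0 <= e ^+ 7 * (1 - e) by rewrite mulr_ge0 ?exprn_ge0 //; lra.
have h8 : 0 <= e ^+ 9 * (1 - e) by rewrite mulr_ge0 ?exprn_ge0 //; lra.
nra.
Qed.

(* With q = cos(a/4), c = cos(a/2), s2 = sin(a/2)^2 and A = a csc a, the right-hand
   side is the u1-free part of 3 eq1 - 2 c^2 eq2 at d^2 = 2. *)
Lemma quarter_affine_gt0 (q c s2 A : R) :
  c = 2 * q ^+ 2 - 1 -> s2 = 4 * q ^+ 2 * (1 - q ^+ 2) -> 23 / 25 <= q < 1 ->
  (q * c)^-1 <= A ->
  0 < (210 * (c ^+ 2 / s2) - 30) * A - 64 * c ^+ 2 - 30 - 210 * (c ^+ 2 / s2).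
Proof.
move=> c_def s2_def /andP[q_ge q_lt1] A_ge.
have q_gt0 : 0 < q by lra.
have c_gt0 : 0 < c by rewrite c_def; nra.
have s2_gt0 : 0 < s2 by rewrite s2_def; apply: mulr_gt0; nra.
set k := c ^+ 2 / s2.
have slope_ge0 : 0 <= 210 * k - 30.
  rewrite subr_ge0 -ler_pdivrMl // ler_pdivlMr // c_def s2_def.
  have := sqr_ge0 (q ^+ 2 - 4 / 5); nra.
apply: (@lt_le_trans _ _ ((210 * k - 30) * (q * c)^-1 - 64 * c ^+ 2 - 30 - 210 * k)).
  have -> : (210 * k - 30) * (q * c)^-1 - 64 * c ^+ 2 - 30 - 210 * k
      = (1 - q) * quarter_poly q / (s2 * q * c).
    rewrite /k /quarter_poly s2_def c_def; field.
    by rewrite -c_def !gt_eqF // subr_gt0; nra.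
  by rewrite divr_gt0 ?mulr_gt0 ?subr_gt0 // quarter_poly_gt0 // q_ge ltW.
by rewrite !lerD2r ler_wpM2l.
Qed.
End QuarterAngleBound.

Section Resolvent.
Context {R : realType}.
Implicit Types a d u x : R.

Definition elim_const a x : R :=
  9 * (1 + cos a) * x - 30 * (1 + a * csc a)
  - 2 * cos (a / 2) ^+ 2 * (4 * x ^+ 3 - 24 * x ^+ 2 + 57 * x
                            + 105 * csc (a / 2) ^+ 2 * (1 - a * csc a)).

Definition u1_of a d : R := - elim_const a (d ^+ 2) / (24 * cos (a / 2) * d * (d ^+ 2 - 2)).

Definition resultant a x : R :=
  576 * cos (a / 2) ^+ 2 * x * (x - 2) ^+ 2 * (3 * (1 + cos a) * x - 10 * (1 + a * csc a))
  - 192 * cos (a / 2) ^+ 2 * x * (x - 2) * elim_const a x + 6 * elim_const a x ^+ 2.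

Lemma eq1_eq2_elim a d u : cos (a / 2) != 0 ->
  3 * eq1 a d u - 2 * cos (a / 2) ^+ 2 * eq2 a d u
  = 24 * cos (a / 2) * d * (d ^+ 2 - 2) * u + elim_const a (d ^+ 2).
Proof. by move=> c0; rewrite /eq1 /eq2 /elim_const /sec; field. Qed.

Lemma eq1_u1_of a d : cos (a / 2) != 0 -> d != 0 -> d ^+ 2 != 2 ->
  eq1 a d (u1_of a d) = resultant a (d ^+ 2) / (24 * cos (a / 2) * d * (d ^+ 2 - 2)) ^+ 2.
Proof.
move=> c0 d0 d2; rewrite /eq1 /u1_of /resultant; move: (elim_const a _) => M.
by field; rewrite c0 d0 subr_eq0 d2.
Qed.

Lemma p1_resultant a d : sin (a / 2) != 0 -> cos (a / 2) != 0 ->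
  p1 a d = - (16 / 3) * sin (a / 2) ^+ 6 * cos (a / 2) ^+ 2 * resultant a (d ^+ 2).
Proof.
move=> s0 c0.
(* After substituting sin(a/2) = t cos(a/2) and cos(a/2)^2 = 1/(1 + t^2) both
   sides are rational functions of a, d and t only. *)
have [t s_tc c2] : exists2 t, sin (a / 2) = t * cos (a / 2) & cos (a / 2) ^+ 2 = (1 + t ^+ 2)^-1.
  by exists (tan (a / 2)); rewrite ?divfK // -cos2_tan2 ?invrK.
have t0 : t != 0 by apply: contraNneq s0 => t0; rewrite s_tc t0 mul0r.
have sin_a : sin a = 2 * t * cos (a / 2) ^+ 2 by rewrite sin_twice_half s_tc; ring.
have csc_half : csc (a / 2) ^+ 2 = (t ^+ 2 * cos (a / 2) ^+ 2)^-1.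
  by rewrite /csc s_tc -exprMn div1r exprVn.
have -> : - (16 / 3) * sin (a / 2) ^+ 6 * cos (a / 2) ^+ 2
    = - (16 / 3) * t ^+ 6 * (cos (a / 2) ^+ 2) ^+ 4.
  by rewrite s_tc; ring.
rewrite /p1 /resultant /elim_const sin_triple sin_double csc_half /csc sin_a
  (cos_twice_half a) c2.
by field; rewrite t0 andbT lt0r_neq0 // ltr_pwDl // sqr_ge0.
Qed.
End Resolvent.

Section FirstQuadrant.
Context {R : realType} {a : R}.
Hypotheses (a_gt0 : 0 < a) (a_le_pihalf : a <= pi / 2).

Local Notation c := (cos (a / 2)).
Local Notation s := (sin (a / 2)).
Local Notation q := (cos (a / 4)).
Local Notation r := (sin (a / 4)).

Let half_half : a / 2 / 2 = a / 4. Proof. by field. Qed.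

(* [lra] ignores section hypotheses, so the proofs below pass them on from here. *)
Let angle_bounds : [/\ 0 < a, a <= pi / 2 & 0 < pi :> R].
Proof. by split; last exact: pi_gt0. Qed.

Let cos_half_gt0 : 0 < c.
Proof. by case: angle_bounds => *; apply: cos_gt0_pihalf; apply/andP; split; lra. Qed.

Let sin_half_gt0 : 0 < s.
Proof. by case: angle_bounds => *; apply: sin_gt0_pi; apply/andP; split; lra. Qed.

Let cos_quarter_gt0 : 0 < q.
Proof. by case: angle_bounds => *; apply: cos_gt0_pihalf; apply/andP; split; lra. Qed.

Let sin_quarter_gt0 : 0 < r.
Proof. by case: angle_bounds => *; apply: sin_gt0_pi; apply/andP; split; lra. Qed.

Lemma cos_quarter_bounds : 23 / 25 <= q < 1.
Proof.
have cos_a_ge0 : 0 <= cos a.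
  by case: angle_bounds => *; apply: cos_ge0_pihalf; apply/andP; split; lra.
have c_def := cos_twice_half (a / 2); rewrite half_half in c_def.
have cos_a := cos_twice_half a; have qr := cos2Dsin2 (a / 4).
have c_gt0 := cos_half_gt0; have q_gt0 := cos_quarter_gt0; have r_gt0 := sin_quarter_gt0.
have c_ge : 7 / 10 <= c by nra.
by apply/andP; split; nra.
Qed.

Lemma a_csc_ge : (q * c)^-1 <= a * csc a.
Proof.
have c_gt0 := cos_half_gt0; have q_gt0 := cos_quarter_gt0; have r_gt0 := sin_quarter_gt0.
have r_le : 4 * r <= a by case: angle_bounds => *; have := @sin_le_id R (a / 4); lra.
rewrite /csc (sin_twice_half a) (sin_twice_half (a / 2)) half_half -subr_ge0.
have -> : a * (1 / (2 * (2 * r * q) * c)) - (q * c)^-1 = (a - 4 * r) / (4 * r * q * c).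
  by field; rewrite !gt_eqF.
by rewrite divr_ge0 ?subr_ge0 // ltW // !mulr_gt0.
Qed.

Lemma elim_const2_gt0 : 0 < elim_const a 2.
Proof.
have s_gt0 := sin_half_gt0; have c_gt0 := cos_half_gt0.
have sin_a_gt0 : 0 < sin a by rewrite sin_twice_half !mulr_gt0.
have -> : elim_const a 2 = (210 * (c ^+ 2 / s ^+ 2) - 30) * (a * csc a)
                          - 64 * c ^+ 2 - 30 - 210 * (c ^+ 2 / s ^+ 2).
  by rewrite /elim_const /csc (cos_twice_half a); field; rewrite !gt_eqF.
apply: (@quarter_affine_gt0 _ q); last 2 first.
- exact: cos_quarter_bounds.
- exact: a_csc_ge.
- by rewrite (cos_twice_half (a / 2)) half_half.
- by rewrite (sin_twice_half (a / 2)) half_half !exprMn sin2cos2; ring.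
Qed.

Lemma p_eq0 x : 0 <= x -> (p a x == 0) = (resultant a x == 0).
Proof.
have s_neq0 := lt0r_neq0 sin_half_gt0; have c_neq0 := lt0r_neq0 cos_half_gt0.
have k_neq0 : - (16 / 3) * s ^+ 6 * c ^+ 2 != 0.
  by rewrite !mulf_neq0 ?expf_neq0 // oppr_eq0.
move=> x_ge0; rewrite /p p1_resultant // sqr_sqrtr //.
by rewrite mulf_eq0 (negbTE k_neq0).
Qed.

Lemma eq1_eq2_iff d u : 0 < d ->
  eq1 a d u = 0 /\ eq2 a d u = 0 <-> resultant a (d ^+ 2) = 0 /\ u = u1_of a d.
Proof.
move=> d_gt0; have c_neq0 := lt0r_neq0 cos_half_gt0; have d_neq0 := lt0r_neq0 d_gt0.
have const2_neq0 := lt0r_neq0 elim_const2_gt0.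
pose L := 24 * c * d * (d ^+ 2 - 2).
have elim v : 3 * eq1 a d v - 2 * c ^+ 2 * eq2 a d v = L * v + elim_const a (d ^+ 2).
  exact: eq1_eq2_elim.
have L_neq0 : d ^+ 2 != 2 -> L != 0 by move=> d2; rewrite !mulf_neq0 // subr_eq0.
have L_u1_of : d ^+ 2 != 2 -> L * u1_of a d + elim_const a (d ^+ 2) = 0.
  by move=> d2; rewrite /u1_of -/L mulrCA mulfV ?mulr1 ?addNr ?L_neq0.
split=> [[e1 e2] | [res ->]].
  have lin0 : L * u + elim_const a (d ^+ 2) = 0 by rewrite -elim e1 e2 !mulr0 subr0.
  have d2 : d ^+ 2 != 2.
    by apply: contra_neq const2_neq0 => d2; rewrite -lin0 /L d2 subrr !mulr0 mul0r add0r.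
  have u_def : u = u1_of a d.
    apply: (mulfI (L_neq0 d2)); apply: (addIr (elim_const a (d ^+ 2))).
    by rewrite lin0 L_u1_of.
  split=> //; move: e1; rewrite u_def eq1_u1_of // => /eqP.
  by rewrite -/L mulf_eq0 invr_eq0 expf_eq0 (negbTE (L_neq0 d2)) orbF => /eqP.
have d2 : d ^+ 2 != 2.
  apply: contra_eq_neq res => ->.
  by rewrite /resultant subrr !(expr0n, mulr0, mul0r) subrr add0r mulf_neq0 ?expf_neq0.
have e1 : eq1 a d (u1_of a d) = 0 by rewrite eq1_u1_of // res mul0r.
split=> //; apply/eqP; have := elim (u1_of a d).
rewrite e1 L_u1_of // mulr0 sub0r => /eqP.
by rewrite oppr_eq0 !mulf_eq0 pnatr_eq0 (negbTE c_neq0).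
Qed.

End FirstQuadrant.

Theorem theorem1 (R : realType) (a : R) (ha0 : 0 < a) (ha1 : a <= pi / 2) :
  card_eq [set du : R * R | 0 < du.1 /\ eq1 a du.1 du.2 = 0 /\ eq2 a du.1 du.2 = 0]
          [set x : R | 0 < x /\ p a x = 0].
Proof.
apply/pcard_eqP/bijPex; exists (fun du : R * R => du.1 ^+ 2); split.
- move=> [d u] /= [d_gt0 /(eq1_eq2_iff ha0 ha1 _ _ d_gt0) [res _]].
  by split; [exact: exprn_gt0 | apply/eqP; rewrite (p_eq0 ha0 ha1) ?sqr_ge0 // res].
- move=> [d1 u1] [d2 u2]; rewrite !inE /= => -[d1_gt0 /(eq1_eq2_iff ha0 ha1 _ _ d1_gt0) [_ ->]].
  move=> [d2_gt0 /(eq1_eq2_iff ha0 ha1 _ _ d2_gt0) [_ ->]] /eqP.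
  by rewrite eqrXn2 ?ltW // => /eqP ->.
- move=> x /= [x_gt0 /eqP]; rewrite (p_eq0 ha0 ha1) ?ltW // => /eqP res.
  have sqrt_gt0 : 0 < Num.sqrt x by rewrite sqrtr_gt0.
  exists (Num.sqrt x, u1_of a (Num.sqrt x)); last by rewrite /= sqr_sqrtr ?ltW.
  by split => //=; apply/(eq1_eq2_iff ha0 ha1 _ _ sqrt_gt0); rewrite sqr_sqrtr ?ltW.
Qed.
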